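(* Let $\phi:\mathbb{R}^4\to\mathbb{R}^4$ be an arbitrary map. The following are equivalent: (a) $\phi$ is continuous, satisfies $\langle r_1-r_2,r_1-r_2\rangle=0\Rightarrow\langle\phi(r_1)-\phi(r_2),\phi(r_1)-\phi(r_2)\rangle=0$ for all $r_1,r_2\in\mathbb{R}^4$, and its range is included in a light cone. (b) There exist a countable set $J$, a family $(U_j)_{j\in J}$ of pairwise disjoint open subsets of $\mathbb{R}^4$, a family $(s_j)_{j\in J}$ of vectors of $\mathcal{Q}$, a point $s'\in\mathbb{R}^4$ and a continuous map $f:\mathbb{R}^4\to\mathbb{R}$ such that: (i) for all distinct $j,j'\in J$ and all $r\in U_j$, $r'\in U_{j'}$, one has $\langle r-r',r-r'\rangle\neq0$; (ii) $f$ vanishes everywhere on $\mathbb{R}^4\setminus\bigcup_{j\in J}U_j$; (iii) for all $r\in\mathbb{R}^4$, $\phi(r)=s'+f(r)\,s_j$ if $r\in U_j$ (for some $j\in J$), and $\phi(r)=s'$ otherwise.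
   Context: $\mathbb{R}^4=\{(x,y,z,t)\}$ carries its standard topology and the inner product $\langle (x,y,z,t),(u,v,w,s)\rangle=-xu-yv-zw+ts$. For $r\in\mathbb{R}^4$, the light cone with vertex $r$ is $\{s: \langle s-r,s-r\rangle=0\}$. $\mathcal{Q}=\{(x,y,z,1): x^2+y^2+z^2=1\}$. *)

From HB Require Import structures.
From mathcomp Require Import all_boot all_order all_algebra.
From mathcomp Require Import all_classical all_reals all_analysis.
Set Implicit Arguments. Unset Strict Implicit. Unset Printing Implicit Defensive.
Import Order.TTheory GRing.Theory Num.Theory.
Local Open Scope ring_scope.
Local Open Scope classical_set_scope.

(* the k-th coordinate (k = 0,1,2,3 <-> x,y,z,t) of a vector of R^4 *)
Definition cd {R : realType} (k : nat) (r : 'rV[R]_4) : R := r ord0 (inord k).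

Definition mink {R : realType} (r s : 'rV[R]_4) : R :=
  - (cd 0 r * cd 0 s) - cd 1 r * cd 1 s - cd 2 r * cd 2 s + cd 3 r * cd 3 s.

Definition light_cone {R : realType} (r : 'rV[R]_4) : set 'rV[R]_4 :=
  [set s | mink (s - r) (s - r) = 0].

Definition Qset {R : realType} : set 'rV[R]_4 :=
  [set s | cd 3 s = 1 /\ cd 0 s ^+ 2 + cd 1 s ^+ 2 + cd 2 s ^+ 2 = 1].

From mathcomp Require Import all_boot all_order all_algebra.
From mathcomp Require Import all_classical all_reals all_analysis.
From mathcomp Require Import ring lra.
Import Order.TTheory GRing.Theory Num.Theory.
Import numFieldNormedType.Exports.
Local Open Scope ring_scope.
Local Open Scope classical_set_scope.

(** Since [phi] maps into the light cone of some [r0], one can write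
    [phi r - r0 = h r *: n r] with [h r] the time component and [n r] in [Q]
    whenever [h r <> 0].  If [r] and [r'] are lightlike separated, so are their
    images, and two nonzero multiples of points of [Q] differ by a null vector
    only if the points coincide; hence [n r = n r'].  Every point near [r] is
    reached from [r] by four short lightlike steps, so [n] is locally constant on
    the open set [h <> 0]; its level sets are the [U j], countably many because
    each contains a rational point.  Conversely, lightlike separated points never
    lie in different [U j], so [phi] differs from [s'] by multiples of one null
    vector on each such pair, and continuity on the boundary of the [U j] follows
    from [|phi r - s'| <= |f r|]. *)

Section Minkowski.
Context {R : realType}.
Local Notation V := 'rV[R]_4.

Lemma cdD k (u v : V) : cd k (u + v) = cd k u + cd k v.
Proof. by rewrite /cd mxE. Qed.

Lemma cdN k (u : V) : cd k (- u) = - cd k u.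
Proof. by rewrite /cd mxE. Qed.

Lemma cdB k (u v : V) : cd k (u - v) = cd k u - cd k v.
Proof. by rewrite cdD cdN. Qed.

Lemma cdZ k a (u : V) : cd k (a *: u) = a * cd k u.
Proof. by rewrite /cd mxE. Qed.

Lemma cd0 k : cd k (0 : V) = 0.
Proof. by rewrite /cd mxE. Qed.

Lemma cd_ord (u : V) (i : 'I_1) (k : 'I_4) : u i k = cd k u.
Proof. by rewrite /cd inord_val [i]ord1. Qed.

Lemma cd_continuous k : continuous (cd k : V -> R).
Proof. by move=> u; apply: coord_continuous. Qed.

Lemma rv4P (u v : V) : cd 0 u = cd 0 v -> cd 1 u = cd 1 v -> cd 2 u = cd 2 v ->
  cd 3 u = cd 3 v -> u = v.
Proof.
move=> e0 e1 e2 e3; apply/rowP => k; rewrite !cd_ord.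
by case: k => -[|[|[|[|//]]]].
Qed.

Lemma minkE (u : V) :
  mink u u = - cd 0 u ^+ 2 - cd 1 u ^+ 2 - cd 2 u ^+ 2 + cd 3 u ^+ 2.
Proof. by rewrite /mink !expr2. Qed.

Lemma minkZ a (u : V) : mink (a *: u) (a *: u) = a ^+ 2 * mink u u.
Proof. by rewrite !minkE !cdZ; ring. Qed.

Lemma minkN (u : V) : mink (- u) (- u) = mink u u.
Proof. by rewrite !minkE !cdN; ring. Qed.

Lemma mink0 : mink (0 : V) 0 = 0.
Proof. by rewrite minkE !cd0; ring. Qed.

Lemma sqr_sum3_eq0 (a b c : R) :
  a ^+ 2 + b ^+ 2 + c ^+ 2 = 0 -> [/\ a = 0, b = 0 & c = 0].
Proof.
move=> abc; have := sqr_ge0 a; have := sqr_ge0 b; have := sqr_ge0 c => c0 b0 a0.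
by split; apply/eqP; rewrite -sqrf_eq0; apply/eqP; lra.
Qed.

Lemma null_cd3_eq0 (u : V) : mink u u = 0 -> cd 3 u = 0 -> u = 0.
Proof.
move=> + u3; rewrite minkE u3 => u_null.
have [u0 u1 u2] : [/\ cd 0 u = 0, cd 1 u = 0 & cd 2 u = 0].
  by apply: sqr_sum3_eq0; lra.
by apply: rv4P; rewrite cd0.
Qed.

Lemma Qset_null (n : V) : Qset n -> mink n n = 0.
Proof. by move=> [n3 n_sph]; rewrite minkE n3; lra. Qed.

Lemma Qset_cd_le1 (n : V) k : Qset n -> (k < 4)%N -> `|cd k n| <= 1.
Proof.
move=> [n3 n_sph]; have := sqr_ge0 (cd 0 n); have := sqr_ge0 (cd 1 n).
have := sqr_ge0 (cd 2 n); case: k => [|[|[|[|//]]]] s2 s1 s0 _;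
  rewrite ?n3 ?normr1 // ler_norml; apply/andP; split; nra.
Qed.

Lemma Qset_norm_le1 (n : V) : Qset n -> `|n| <= 1.
Proof.
move=> Qn; change (mx_norm n <= 1); rewrite mx_normrE.
apply: bigmax_le => // -[i k] _.
by rewrite cd_ord Qset_cd_le1.
Qed.

Definition tnormalize (v : V) : V := (cd 3 v)^-1 *: v.

Lemma tnormalize_Qset (v : V) : mink v v = 0 -> cd 3 v != 0 -> Qset (tnormalize v).
Proof.
rewrite minkE => v_null v3; split; rewrite /tnormalize !cdZ ?mulVf //.
rewrite !exprMn -!mulrDr.
have -> : cd 0 v ^+ 2 + cd 1 v ^+ 2 + cd 2 v ^+ 2 = cd 3 v ^+ 2 by lra.
by rewrite -exprMn mulVf // expr1n.
Qed.

Lemma tnormalizeK (v : V) : cd 3 v != 0 -> cd 3 v *: tnormalize v = v.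
Proof. by move=> v3; rewrite /tnormalize scalerA mulfV // scale1r. Qed.

Lemma Qset_null_diff_eq {n m : V} {a b : R} : Qset n -> Qset m -> a != 0 -> b != 0 ->
  mink (a *: n - b *: m) (a *: n - b *: m) = 0 -> n = m.
Proof.
move=> [n3 n_sph] [m3 m_sph] a0 b0.
set S := (cd 0 n - cd 0 m) ^+ 2 + (cd 1 n - cd 1 m) ^+ 2 + (cd 2 n - cd 2 m) ^+ 2.
have -> : mink (a *: n - b *: m) (a *: n - b *: m) = - (a * b) * S.
  rewrite minkE !cdB !cdZ n3 m3.
  (* the defect of this identity vanishes on the unit sphere *)
  transitivity (- (a * b) * S
    + a * (b - a) * (cd 0 n ^+ 2 + cd 1 n ^+ 2 + cd 2 n ^+ 2 - 1)
    + b * (a - b) * (cd 0 m ^+ 2 + cd 1 m ^+ 2 + cd 2 m ^+ 2 - 1)).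
    by rewrite /S; ring.
  by rewrite n_sph m_sph subrr !mulr0 !addr0.
move/eqP; rewrite mulf_eq0 oppr_eq0 mulf_eq0 (negbTE a0) (negbTE b0) /= => /eqP.
move=> /sqr_sum3_eq0[/subr0_eq e0 /subr0_eq e1 /subr0_eq e2].
by apply: rv4P => //; rewrite n3 m3.
Qed.

End Minkowski.

Section NullFrame.
Context {R : realType}.
Local Notation V := 'rV[R]_4.

Definition row4 (a b c d : R) : V := \row_(i < 4) nth 0 [:: a; b; c; d] i.

Lemma cd_row4 k a b c d :
  (k < 4)%N -> cd k (row4 a b c d) = nth 0 [:: a; b; c; d] k.
Proof. by move=> k4; rewrite /cd mxE inordK. Qed.

Definition null_frame (k : nat) : V :=
  match k with
  | 0 => row4 (2^-1) 0 0 (2^-1)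
  | 1 => row4 (- 2^-1) 0 0 (2^-1)
  | 2 => row4 0 1 0 1
  | _ => row4 0 0 1 1
  end.

Definition null_coord (k : nat) (w : V) : R :=
  match k with
  | 0 => cd 0 w + cd 3 w - cd 1 w - cd 2 w
  | 1 => cd 3 w - cd 1 w - cd 2 w - cd 0 w
  | 2 => cd 1 w
  | _ => cd 2 w
  end.

Definition null_step k (w : V) : V := null_coord k w *: null_frame k.

Lemma null_step_null k w : mink (null_step k w) (null_step k w) = 0.
Proof.
rewrite minkZ [mink _ _](_ : _ = 0) ?mulr0 // minkE.
by case: k => [|[|[|k]]]; rewrite /null_frame !cd_row4 //=; ring.
Qed.

Lemma null_step_sum w : null_step 0 w + null_step 1 w + null_step 2 w + null_step 3 w = w.
Proof.
by apply: rv4P; rewrite !(cdD, cdZ) /null_frame !cd_row4 //=; field.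
Qed.

Lemma null_step0 k : null_step k 0 = 0.
Proof.
by rewrite /null_step; case: k => [|[|[|k]]]; rewrite /= !cd0 ?(addr0, subr0) scale0r.
Qed.

Lemma null_coord_continuous k : continuous (null_coord k).
Proof.
by move=> w; case: k => [|[|[|k]]] /=; repeat (apply: cvgB || apply: cvgD);
  exact: nbhs_filter || exact: cd_continuous.
Qed.

Lemma null_step_continuous k : continuous (null_step k).
Proof. by move=> w; exact: cvgZ (null_coord_continuous k w) (cvg_cst _). Qed.

Lemma lightlike_invariant_locally_constant (T : Type) (P : set V) (d : V -> T) :
  open P ->
  (forall p q, P p -> P q -> mink (p - q) (p - q) = 0 -> d p = d q) ->
  forall r, P r -> \forall x \near r, P x /\ d x = d r.
Proof.
move=> oP d_null r Pr.
have nearP (q : V -> V) : q x @[x --> r] --> r -> \forall x \near r, P (q x).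
  by move=> qr; apply: qr; apply: open_nbhs_nbhs.
have step_cvg k : null_step k (x - r) @[x --> r] --> (0 : V).
  have xr : x - r @[x --> r] --> (0 : V)
    by rewrite -(subrr r); apply: cvgB cvg_id (cvg_cst r).
  by have := cvg_comp _ _ xr (null_step_continuous k 0); rewrite null_step0.
have add_step_cvg (q : V -> V) k : q x @[x --> r] --> r ->
    q x + null_step k (x - r) @[x --> r] --> r.
  by move=> qr; rewrite -[X in _ --> X](addr0 r); exact: cvgD qr (step_cvg k).
(* x is reached from r by four lightlike steps, through points q1, q2, q3 close to r *)
pose q1 x := r + null_step 0 (x - r).
pose q2 x := q1 x + null_step 1 (x - r).
pose q3 x := q2 x + null_step 2 (x - r).
have q1r : q1 x @[x --> r] --> r.
  by apply: (add_step_cvg (fun=> r)); apply: cvg_cst; exact: nbhs_filter.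
have q2r : q2 x @[x --> r] --> r := add_step_cvg q1 1 q1r.
have q3r : q3 x @[x --> r] --> r := add_step_cvg q2 2 q2r.
near=> x.
have x_q3 : x = q3 x + null_step 3 (x - r).
  rewrite /q3 /q2 /q1; move: (null_step_sum (x - r)); rewrite -!addrA => ->.
  by rewrite addrC subrK.
have dq k (q : V -> V) : P (q x) -> P (q x + null_step k (x - r)) ->
    d (q x + null_step k (x - r)) = d (q x).
  by move=> Pq Pq'; apply: d_null => //; rewrite addrAC subrr add0r null_step_null.
have P1 : P (q1 x) by near: x; apply: nearP.
have P2 : P (q2 x) by near: x; apply: nearP.
have P3 : P (q3 x) by near: x; apply: nearP.
have Px : P x by near: x; apply: open_nbhs_nbhs.
split=> //; rewrite {1}x_q3 dq -?x_q3 // [q3 x]/q3 dq // [q2 x]/q2 dq //.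
by rewrite [q1 x]/q1 (dq 0 (fun=> r)).
Unshelve. all: by end_near.
Qed.

End NullFrame.

Lemma open_rational_point {R : realType} {n} {A : set 'rV[R]_n} :
  open A -> A !=set0 -> exists q : 'rV[rat]_n, A (map_mx ratr q).
Proof.
move=> oA [x Ax].
have /nbhs_ballP[e e0 eA] : nbhs x A by apply: open_nbhs_nbhs.
have /choice[q qx] :
    forall k : 'I_n, exists q : rat, ratr q \in `]x ord0 k, x ord0 k + e[%R.
  by move=> k; apply: rat_in_itvoo; rewrite ltrDl.
exists (\row_k q k); apply: eA; split => // i k; rewrite [i]ord1 !mxE.
by move: (qx k); rewrite in_itv /= => /andP[lo hi];
  rewrite /ball /= ltr_norml; apply/andP; split; lra.
Qed.

Lemma countable_disjoint_open (R : realType) n (J : Type) (U : J -> set 'rV[R]_n) :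
  (forall j, open (U j)) -> (forall j, U j !=set0) ->
  (forall j j', j <> j' -> U j `&` U j' = set0) -> countable [set: J].
Proof.
move=> oU neU disjU; apply/countable_injP.
have /choice[q Uq] := fun j => open_rational_point (oU j) (neU j).
exists (fun j => pickle (q j)) => j j' _ _ /(pcan_inj pickleK) qjj'.
apply: contrapT => /disjU UU0.
suff : (U j `&` U j') (map_mx ratr (q j)) by rewrite UU0.
by split; rewrite // qjj'.
Qed.

Definition lightlike_preserving {R : realType} (phi : 'rV[R]_4 -> 'rV[R]_4) :=
  forall r1 r2 : 'rV[R]_4, mink (r1 - r2) (r1 - r2) = 0 ->
    mink (phi r1 - phi r2) (phi r1 - phi r2) = 0.

Definition ray_decomposition {R : realType} (phi : 'rV[R]_4 -> 'rV[R]_4) :=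
  exists (J : Type) (U : J -> set 'rV[R]_4) (s : J -> 'rV[R]_4)
         (s' : 'rV[R]_4) (f : 'rV[R]_4 -> R),
    countable [set: J] /\
    (forall j, open (U j)) /\
    (forall j j', j <> j' -> U j `&` U j' = set0) /\
    (forall j, Qset (s j)) /\
    continuous f /\
    (forall j j' r r', j <> j' -> U j r -> U j' r' -> mink (r - r') (r - r') <> 0) /\
    (forall r, ~ (\bigcup_j U j) r -> f r = 0) /\
    (forall r, (forall j, U j r -> phi r = s' + f r *: s j) /\
               (~ (\bigcup_j U j) r -> phi r = s')).

Section LightConeMap.
Context {R : realType}.
Local Notation V := 'rV[R]_4.
Variables (phi : V -> V) (r0 : V).
Hypothesis phi_cont : continuous phi.
Hypothesis phi_lightlike : lightlike_preserving phi.
Hypothesis phi_cone : range phi `<=` light_cone r0.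

Definition height (r : V) : R := cd 3 (phi r - r0).
Definition ray (r : V) : V := tnormalize (phi r - r0).

Lemma height_continuous : continuous height.
Proof.
move=> r; apply: (continuous_comp (f := fun r => phi r - r0) (g := cd 3)).
  exact: cvgB (phi_cont r) (cvg_cst r0).
exact: cd_continuous.
Qed.

Lemma open_height_neq0 : open [set r | height r != 0].
Proof. by rewrite openE => r; apply: cvgr_neq0 (height_continuous r). Qed.

Lemma ray_Qset {r : V} : height r != 0 -> Qset (ray r).
Proof. by apply: tnormalize_Qset; apply: phi_cone; exists r. Qed.

Lemma phi_height_ray {r : V} : height r != 0 -> phi r = r0 + height r *: ray r.
Proof. by move=> hr; rewrite tnormalizeK // addrC subrK. Qed.

Lemma phi_height0 {r : V} : height r = 0 -> phi r = r0.
Proof.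
move=> hr; apply/eqP; rewrite -subr_eq0; apply/eqP/null_cd3_eq0 => //.
by apply: phi_cone; exists r.
Qed.

Lemma ray_lightlike {p q : V} : height p != 0 -> height q != 0 ->
  mink (p - q) (p - q) = 0 -> ray p = ray q.
Proof.
move=> hp hq /phi_lightlike.
rewrite (phi_height_ray hp) (phi_height_ray hq) opprD addrACA subrr add0r.
exact: Qset_null_diff_eq (ray_Qset hp) (ray_Qset hq) hp hq.
Qed.

Lemma ray_locally_constant {r : V} : height r != 0 ->
  \forall x \near r, height x != 0 /\ ray x = ray r.
Proof.
exact: lightlike_invariant_locally_constant open_height_neq0 (@ray_lightlike) r.
Qed.

Definition ray_index := {n : V | `[< exists2 r, height r != 0 & ray r = n >]}.

Definition ray_piece (j : ray_index) : set V :=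
  [set r | height r != 0 /\ ray r = val j].

Lemma ray_piece_open j : open (ray_piece j).
Proof.
rewrite openE => r [hr rj].
have := ray_locally_constant hr; apply: filterS => x [hx xr].
by split; rewrite // xr.
Qed.

Lemma ray_piece_neq0 j : ray_piece j !=set0.
Proof. by have /asboolP[r hr rj] := valP j; exists r. Qed.

Lemma ray_piece_eq j j' r : ray_piece j r -> ray_piece j' r -> j = j'.
Proof. by move=> [_ rj] [_ rj']; apply: val_inj; rewrite -rj -rj'. Qed.

Lemma ray_piece_disjoint j j' : j <> j' -> ray_piece j `&` ray_piece j' = set0.
Proof.
move=> jj'; apply/seteqP; split=> // r [rj rj'].
by apply: jj'; apply: ray_piece_eq rj rj'.
Qed.

Lemma countable_ray_index : countable [set: ray_index].
Proof.
exact: countable_disjoint_open ray_piece_open ray_piece_neq0 ray_piece_disjoint.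
Qed.

Lemma ray_index_Qset (j : ray_index) : Qset (val j).
Proof. by have /asboolP[r hr <-] := valP j; apply: ray_Qset. Qed.

Lemma ray_piece_spacelike j j' r r' : j <> j' -> ray_piece j r -> ray_piece j' r' ->
  mink (r - r') (r - r') <> 0.
Proof.
move=> jj' [hr rj] [hr' rj'] /(ray_lightlike hr hr') rr'; apply: jj'.
by apply: val_inj; rewrite -rj -rj'.
Qed.

Lemma height_outside_ray_pieces r : ~ (\bigcup_j ray_piece j) r -> height r = 0.
Proof.
move=> out; apply/eqP; apply: contra_notT out => hr.
have j_r : `[< exists2 r', height r' != 0 & ray r' = ray r >] by apply/asboolP; exists r.
by exists (exist _ (ray r) j_r).
Qed.

Lemma light_cone_map_ray_decomposition : ray_decomposition phi.
Proof.
exists ray_index, ray_piece, val, r0, height.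
split; first exact: countable_ray_index.
split; first exact: ray_piece_open.
split; first exact: ray_piece_disjoint.
split; first exact: ray_index_Qset.
split; first exact: height_continuous.
split; first exact: ray_piece_spacelike.
split; first exact: height_outside_ray_pieces.
move=> r; split=> [j [hr <-]|out]; first exact: phi_height_ray.
exact/phi_height0/height_outside_ray_pieces.
Qed.

End LightConeMap.

Section RayDecomposition.
Context {R : realType}.
Local Notation V := 'rV[R]_4.
Variables (phi : V -> V) (J : Type) (U : J -> set V) (s : J -> V) (s' : V) (f : V -> R).
Hypothesis U_open : forall j, open (U j).
Hypothesis s_Qset : forall j, Qset (s j).
Hypothesis f_cont : continuous f.
Hypothesis U_spacelike : forall j j' r r', j <> j' -> U j r -> U j' r' ->
  mink (r - r') (r - r') <> 0.
Hypothesis f_outside : forall r, ~ (\bigcup_j U j) r -> f r = 0.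
Hypothesis phi_piece : forall j r, U j r -> phi r = s' + f r *: s j.
Hypothesis phi_outside : forall r, ~ (\bigcup_j U j) r -> phi r = s'.

Lemma phi_outsideE r n : ~ (\bigcup_j U j) r -> phi r = s' + f r *: n.
Proof. by move=> out; rewrite phi_outside // f_outside // scale0r addr0. Qed.

Lemma phi_lightlike_pair r1 r2 : mink (r1 - r2) (r1 - r2) = 0 ->
  exists2 n : V, mink n n = 0 & phi r1 = s' + f r1 *: n /\ phi r2 = s' + f r2 *: n.
Proof.
have same_ray j r r' : U j r -> mink (r - r') (r - r') = 0 -> phi r' = s' + f r' *: s j.
  move=> Ujr rr'; have [[j' _ Uj'r']|out] := pselect ((\bigcup_i U i) r').
    have -> : j = j' by apply: contrapT => jj'; exact: U_spacelike jj' Ujr Uj'r' rr'.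
    exact: phi_piece.
  exact: phi_outsideE.
move=> r12; have [[j _ Ujr1]|out1] := pselect ((\bigcup_j U j) r1).
  by exists (s j); [exact: Qset_null | split; [exact: phi_piece | exact: same_ray r12]].
have [[j _ Ujr2]|out2] := pselect ((\bigcup_j U j) r2).
  exists (s j); first exact: Qset_null.
  by split; [apply: same_ray Ujr2 _; rewrite -opprB minkN | exact: phi_piece].
by exists 0; [exact: mink0 | split; exact: phi_outsideE].
Qed.

Lemma phi_lightlike_preserving : lightlike_preserving phi.
Proof.
move=> r1 r2 /phi_lightlike_pair[n n_null [-> ->]].
by rewrite opprD addrACA subrr add0r -scalerBl minkZ n_null mulr0.
Qed.

Lemma phi_range_light_cone : range phi `<=` light_cone s'.
Proof.
move=> _ [r _ <-]; have [|n n_null [-> _]] := phi_lightlike_pair r r.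
  by rewrite subrr mink0.
by rewrite /light_cone /= addrAC subrr add0r minkZ n_null mulr0.
Qed.

Lemma phi_sub_norm_le r : `|phi r - s'| <= `|f r|.
Proof.
have [[j _ Ujr]|out] := pselect ((\bigcup_j U j) r).
  by rewrite (phi_piece j) // addrAC subrr add0r normrZ ler_piMr // Qset_norm_le1.
by rewrite phi_outside // subrr normr0.
Qed.

Lemma phi_continuous : continuous phi.
Proof.
move=> r; have [[j _ Ujr]|out] := pselect ((\bigcup_j U j) r).
  have phiE : \forall y \near r, s' + f y *: s j = phi y.
    apply: filterS (open_nbhs_nbhs (conj (U_open j) Ujr)) => y Ujy.
    by rewrite (phi_piece j).
  apply: cvg_trans (near_eq_cvg phiE) _; rewrite (phi_piece j) //.
  exact: cvgD (cvg_cst s') (cvgZ (f_cont r) (cvg_cst _)).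
have f0 : f y @[y --> r] --> 0 by rewrite -(f_outside r out); exact: f_cont.
rewrite /continuous_at phi_outside //.
apply/cvgrPdist_le => [|e e0]; first exact: nbhs_filter.
near=> y; rewrite distrC; apply: le_trans (phi_sub_norm_le y) _; near: y.
exact: cvgr0_norm_le f0 e e0.
Unshelve. all: by end_near.
Qed.

End RayDecomposition.

Lemma ray_decomposition_light_cone_map {R : realType} (phi : 'rV[R]_4 -> 'rV[R]_4) :
  ray_decomposition phi ->
  continuous phi /\ lightlike_preserving phi /\ exists r, range phi `<=` light_cone r.
Proof.
move=> [J [U [s [s' [f [_ [U_open [_ [s_Q [f_cont [U_sp [f_out phiE]]]]]]]]]]]].
have phi_piece j r : U j r -> phi r = s' + f r *: s j by move=> Ujr; apply: (phiE r).1.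
have phi_out r : ~ (\bigcup_j U j) r -> phi r = s' by apply: (phiE r).2.
split; first exact: phi_continuous U_open s_Q f_cont f_out phi_piece phi_out.
split; first exact: phi_lightlike_preserving s_Q U_sp f_out phi_piece phi_out.
by exists s'; apply: phi_range_light_cone s_Q U_sp f_out phi_piece phi_out.
Qed.

Theorem proposition3p1 (R : realType) (phi : 'rV[R]_4 -> 'rV[R]_4) :
  (continuous phi /\
   (forall r1 r2 : 'rV[R]_4,
      mink (r1 - r2) (r1 - r2) = 0 ->
      mink (phi r1 - phi r2) (phi r1 - phi r2) = 0) /\
   (exists r : 'rV[R]_4, range phi `<=` light_cone r))
  <->
  (exists (J : Type) (U : J -> set 'rV[R]_4) (s : J -> 'rV[R]_4)
          (s' : 'rV[R]_4) (f : 'rV[R]_4 -> R),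
     countable [set: J] /\
         (forall j, open (U j)) /\
         (forall j j', j <> j' -> U j `&` U j' = set0) /\
         (forall j, Qset (s j)) /\
         continuous f /\
         (forall j j' r r', j <> j' -> U j r -> U j' r' ->
            mink (r - r') (r - r') <> 0) /\
         (forall r, ~ (\bigcup_j U j) r -> f r = 0)  /\
         (forall r, (forall j, U j r -> phi r = s' + f r *: s j) /\
                    (~ (\bigcup_j U j) r -> phi r = s'))).
Proof.
split=> [[phi_cont [phi_null [r0 phi_cone]]]|]; last first.
  exact: ray_decomposition_light_cone_map.
exact: light_cone_map_ray_decomposition phi_cont phi_null phi_cone.
Qed.
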